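(* Let $n\ge 4$, let $\mathcal C$ be a maximal independent set of the cycle $C_n$, and let $G$ be the $\mathcal C$-suspension of $C_n$. Then $G$ is pseudo-Gorenstein$^{*}$ if and only if one of the following holds: (a) $n\equiv 0,3\pmod{12}$ and $|\mathcal C|=\lceil n/3\rceil$; (b) $n\equiv 4,7,8,11\pmod{12}$ and $|\mathcal C|=\lfloor n/2\rfloor$; (c) $n\equiv 1,2,5,10\pmod{12}$ and $|\mathcal C|\ne\lfloor n/2\rfloor$.
   Context: For $\varnothing\ne C\subseteq V(G)$, the $C$-suspension of $G$ is obtained by adding a new vertex $z$ adjacent exactly to the vertices of $C$. $C_n$ is the cycle on $n$ vertices, with independence number $\lfloor n/2\rfloor$. For a finite simple graph $G$ on vertex set $[N]$, let $S=K[x_1,\dots,x_N]$ ($K$ a field) and $I(G)$ the edge ideal generated by $x_ix_j$, $\{i,j\}\in E(G)$. Let $\alpha(G)$ be the independence number (equal to $\dim S/I(G)$). Write the Hilbert series of $S/I(G)$ uniquely as $(h_0+\dots+h_st^s)/(1-t)^{\alpha(G)}$ with $h_s\ne 0$, and $\mathfrak a(G)=s-\alpha(G)$. $G$ is pseudo-Gorenstein$^{*}$ if $h_s=1$ and $\mathfrak a(G)=0$. *)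

From mathcomp Require Import all_boot all_order all_algebra.
Set Implicit Arguments. Unset Strict Implicit. Unset Printing Implicit Defensive.
Import GRing.Theory.

(* A finite simple graph on vertex set 'I_N = {0,..,N-1} is given by a
   symmetric irreflexive adjacency relation e : rel 'I_N. *)

Definition independent (N : nat) (e : rel 'I_N) (A : {set 'I_N}) : bool :=
  [forall x in A, forall y in A, ~~ e x y].

Definition maximal_independent (N : nat) (e : rel 'I_N) (A : {set 'I_N}) : Prop :=
  independent e A /\
  forall B : {set 'I_N}, independent e B -> A \subset B -> B = A.

Definition indep_num (N : nat) (e : rel 'I_N) : nat :=
  \max_(A : {set 'I_N} | independent e A) #|A|.

Definition cycle_rel (n : nat) : rel 'I_n :=
  fun i j => (val j == (val i).+1 %% n) || (val i == (val j).+1 %% n).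

(* C-suspension: new vertex z = ord_max of 'I_N.+1, adjacent exactly to C *)
Definition suspension (N : nat) (e : rel 'I_N) (C : {set 'I_N}) : rel 'I_N.+1 :=
  fun x y =>
    match unlift ord_max x, unlift ord_max y with
    | Some a, Some b => e a b
    | None, Some b => b \in C
    | Some a, None => a \in C
    | None, None => false
    end.

(* Hilbert function of S/I(G): (S/I(G))_d has as K-basis the monomials
   x^m of degree d not in the monomial ideal I(G), i.e. not divisible by
   any x_i x_j with {i,j} an edge.  A monomial of degree d is an exponent
   vector m : 'I_N -> {0..d} with sum d. *)
Definition hilb_fun (N : nat) (e : rel 'I_N) (d : nat) : nat :=
  #|[set m : {ffun 'I_N -> 'I_d.+1} |
      (\sum_(i < N) (m i : nat) == d) &&
      [forall i, forall j, e i j ==> ((val (m i) == 0) || (val (m j) == 0))]]|.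

(* Coefficients of h(t) = (1-t)^alpha * HS(t), where HS(t) = sum_d H(d) t^d;
   so HS(t) = (h_0 + ... + h_s t^s)/(1-t)^alpha. *)
Definition hcoef (N : nat) (e : rel 'I_N) (k : nat) : int :=
  \sum_(j < k.+1) ((-1) ^+ j * ('C(indep_num e, j))%:Z * (hilb_fun e (k - j))%:Z)%R.

(* pseudo-Gorenstein^*: the numerator has degree s = alpha (a(G) = 0)
   and leading coefficient h_s = 1. *)
Definition pseudo_gorenstein_star (N : nat) (e : rel 'I_N) : Prop :=
  hcoef e (indep_num e) = 1%R /\
  forall k, indep_num e < k -> hcoef e k = 0%R.

(* A standard monomial of S/I(G) is determined by its support, an independent set F,
   and by a composition of its degree into |F| positive parts. Summing over F, each
   independent set contributes (-1)^(k-|F|) C(alpha-|F|, k-|F|) to h_k. Hence h_k = 0 for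
   every k > alpha, and h_alpha = (-1)^alpha I(G;-1), where I(G;-1) = sum_F (-1)^|F| is
   the independence polynomial at -1: G is pseudo-Gorenstein* iff I(G;-1) = (-1)^alpha.

   Deleting a vertex v gives I(W;-1) = I(W - v;-1) - I(W - N[v];-1), and similarly for
   alpha. At the apex of the C-suspension of C_n this yields I(G;-1) = I(C_n;-1) -
   I(C_n - C;-1) and alpha(G) = max(n/2, |C| + 1). Cutting the cycle into paths shows
   that I(C_n;-1) depends only on n mod 6. Every vertex outside the maximal independent
   set C is a successor or a predecessor of a vertex of C: a vertex that is both is
   isolated in C_n - C, so I(C_n - C;-1) = 0; otherwise n = 3|C| and C_n - C is a perfect
   matching, so I(C_n - C;-1) = (-1)^|C|. What remains is arithmetic modulo 12. *)

From mathcomp Require Import all_boot all_order all_algebra.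
From mathcomp Require Import zify ring.
Set Implicit Arguments. Unset Strict Implicit. Unset Printing Implicit Defensive.
Import GRing.Theory Num.Theory.

Lemma bigmaxS (I : finType) (P : pred I) (F : I -> nat) i0 :
  P i0 -> \max_(i | P i) (F i).+1 = (\max_(i | P i) F i).+1.
Proof.
move=> Pi0; apply/eqP; rewrite eqn_leq; apply/andP; split.
  by apply/bigmax_leqP => i Pi; rewrite ltnS leq_bigmax_cond.
have [|i Pi ->] := @eq_bigmax_cond _ P F; first by apply/card_gt0P; exists i0.
exact: leq_bigmax_cond.
Qed.

Section IndependentSets.
Variables (N : nat) (e : rel 'I_N).
Hypotheses (e_sym : symmetric e) (e_irr : irreflexive e).
Implicit Types (u v : 'I_N) (F W : {set 'I_N}).

Lemma independentP F : reflect {in F &, forall x y, ~~ e x y} (independent e F).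
Proof.
apply: (iffP forall_inP) => [H x y xF yF | H x xF].
  by move/forall_inP: (H x xF) => /(_ y yF).
by apply/forall_inP => y yF; apply: H.
Qed.

Lemma independent0 : independent e set0.
Proof. by apply/independentP => x; rewrite inE. Qed.

Definition nbhd v : {set 'I_N} := [set u | e v u].

Lemma independentU1 v F :
  independent e (v |: F) = independent e F && [disjoint F & nbhd v].
Proof.
rewrite disjoints_subset; apply/independentP/andP => [H | [/independentP H /subsetP H2] x y].
  split; first by apply/independentP => x y xF yF; apply: H; rewrite in_setU1 ?xF ?yF orbT.
  by apply/subsetP => u uF; rewrite !inE; apply: H; rewrite in_setU1 ?uF ?eqxx ?orbT.
have nb u : u \in F -> ~~ e v u by move=> /H2; rewrite !inE.
rewrite !in_setU1 => /orP[/eqP-> | xF] /orP[/eqP-> | yF].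
- by rewrite e_irr.
- exact: nb.
- by rewrite e_sym nb.
- exact: H.
Qed.

Lemma independent_setU1_sub v W F : v \in W ->
  [&& v |: F \subset W, independent e (v |: F) & v \notin F] =
  (F \subset W :\ v :\: nbhd v) && independent e F.
Proof.
move=> vW; rewrite independentU1 subUset sub1set vW subsetD subsetD1.
by case: (F \subset W); case: (independent e F); case: [disjoint F & nbhd v]; case: (v \in F).
Qed.

Definition big_indep (R : Type) (idx : R) (op : R -> R -> R) (g : nat -> R) W :=
  \big[op/idx]_(F : {set 'I_N} | (F \subset W) && independent e F) g #|F|.

Lemma big_indep_split (R : Type) (idx : R) (op : Monoid.com_law idx) g v W :
  v \in W ->
  big_indep idx op g W =
  op (big_indep idx op g (W :\ v)) (big_indep idx op (g \o succn) (W :\ v :\: nbhd v)).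
Proof.
move=> vW; rewrite /big_indep (bigID (fun F => v \notin F)) /=.
congr (op _ _); first by apply: eq_bigl => F; rewrite subsetD1 andbAC.
rewrite (reindex_onto (fun F => v |: F) (fun F => F :\ v)) /=; last first.
  by move=> F /andP[_]; rewrite negbK => vF; rewrite setD1K.
have setU1K_eq F : ((v |: F) :\ v == F) = (v \notin F).
  by apply/eqP/idP => [<- | /setU1K //]; rewrite setD11.
apply: eq_big => [F | F /andP[_]]; last by rewrite setU1K_eq cardsU1 => ->.
by rewrite setU1K_eq -independent_setU1_sub // setU11 andbT -andbA.
Qed.

Lemma maximal_independent_dominating C w :
  maximal_independent e C -> w \notin C -> exists2 y, y \in C & e w y.
Proof.
move=> [iC maxC] wC; have [/exists_inP[y yC wy] | noy] := boolP [exists y in C, e w y].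
  by exists y.
have iwC : independent e (w |: C).
  rewrite independentU1 iC disjoints_subset; apply/subsetP => y yC; rewrite !inE.
  by apply: contra noy => wy; apply/exists_inP; exists y.
by move/setP/(_ w): (maxC _ iwC (subsetUr _ _)); rewrite in_setU1 eqxx (negbTE wC).
Qed.

Lemma nbhdC u v : (u \in nbhd v) = (v \in nbhd u).
Proof. by rewrite !inE e_sym. Qed.

Definition alt_indep W : int := big_indep 0%R +%R (fun k => (-1) ^+ k)%R W.

Lemma alt_indep_split v W : v \in W ->
  alt_indep W = (alt_indep (W :\ v) - alt_indep (W :\ v :\: nbhd v))%R.
Proof.
move=> vW; rewrite /alt_indep (big_indep_split _ _ vW); congr (_ + _)%R.
by rewrite /big_indep -sumrN; apply: eq_bigr => F _; rewrite /= exprS mulN1r.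
Qed.

Lemma alt_indep0 : alt_indep set0 = 1%R.
Proof.
rewrite /alt_indep /big_indep (big_pred1 set0) ?cards0 // => F /=.
by rewrite subset0; case: eqP => // ->; rewrite independent0.
Qed.

Lemma alt_indep_isolated v W : v \in W -> [disjoint W & nbhd v] -> alt_indep W = 0%R.
Proof.
move=> vW /(disjointWl (subsetDl W [set v])) /setDidPl WvN.
by rewrite (alt_indep_split vW) WvN subrr.
Qed.

Lemma alt_indep_isolated_edge u v W : v \in W ->
  W :&: nbhd v = [set u] -> W :&: nbhd u = [set v] ->
  alt_indep W = (- alt_indep (W :\ v :\ u))%R.
Proof.
move=> vW Nv Nu; rewrite (alt_indep_split vW).
have /setIP[uW vNu] : u \in W :&: nbhd v by rewrite Nv set11.
have vu : v != u by apply: contraTneq vNu => ->; rewrite inE e_irr.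
rewrite (@alt_indep_isolated u); last 2 first.
- by rewrite !inE eq_sym vu.
- by rewrite -setI_eq0 setDE setIAC Nu setICr.
rewrite sub0r; congr (- alt_indep _)%R; apply/setP => x; rewrite !inE.
move/setP/(_ x): Nv; rewrite !inE => /esym.
by case: (x \in W); case: (e v x); case: (x == u); case: (x == v).
Qed.

Lemma alt_indep_perfect_matching m W : #|W| = m.*2 ->
  {in W, forall v, exists u, W :&: nbhd v = [set u]} -> alt_indep W = ((-1) ^+ m)%R.
Proof.
elim: m W => [|m IH] W cardW matchW.
  by move/eqP: cardW; rewrite cards_eq0 => /eqP ->; rewrite alt_indep0.
have /card_gt0P[v vW] : 0 < #|W| by rewrite cardW.
have [u Nv] := matchW v vW.
have /setIP[uW vNu] : u \in W :&: nbhd v by rewrite Nv set11.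
have [t Nu] := matchW u uW.
have /set1P tv : v \in [set t] by rewrite -Nu inE vW nbhdC.
rewrite -{}tv in Nu; have vu : v != u by apply: contraTneq vNu => ->; rewrite inE e_irr.
have unmatched x : x \in W :\ v :\ u -> (W :\ v :\ u) :&: nbhd x = W :&: nbhd x.
  rewrite !inE => /and3P[xu xv xW].
  have xNu : (x \in W :&: nbhd u) = false by rewrite Nu inE (negbTE xv).
  have xNv : (x \in W :&: nbhd v) = false by rewrite Nv inE (negbTE xu).
  rewrite !inE xW /= in xNu xNv; rewrite e_sym in xNu; rewrite e_sym in xNv.
  apply/setP => y; rewrite !inE.
  case: (y =P u) => [-> | _]; first by rewrite xNu !andbF.
  by case: (y =P v) => [-> | _]; rewrite ?xNv ?andbF.
rewrite (alt_indep_isolated_edge vW Nv Nu) (IH (W :\ v :\ u)) ?exprS ?mulN1r //.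
  move: cardW; rewrite (cardsD1 v W) vW (cardsD1 u (W :\ v)) !inE eq_sym vu uW.
  by rewrite doubleS => -[].
by move=> x Wx; rewrite unmatched //; apply: matchW; move: Wx; rewrite !inE => /and3P[].
Qed.

Definition indep_num_in W : nat := big_indep 0%N maxn id W.

Lemma indep_num_inP W k :
  reflect (forall F, F \subset W -> independent e F -> #|F| <= k) (indep_num_in W <= k).
Proof.
apply: (iffP (bigmax_leqP _ _ _)) => [H F FW iF | H F /andP[]]; last exact: H.
by apply: H; rewrite FW iF.
Qed.

Lemma leq_card_indep_num_in W F :
  F \subset W -> independent e F -> #|F| <= indep_num_in W.
Proof.
by move=> FW iF; apply: (@leq_bigmax_cond _ _ (fun F : {set 'I_N} => #|F|)); rewrite FW iF.
Qed.

Lemma indep_num_in_split v W : v \in W ->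
  indep_num_in W = maxn (indep_num_in (W :\ v)) (indep_num_in (W :\ v :\: nbhd v)).+1.
Proof.
move=> vW; rewrite /indep_num_in (big_indep_split _ _ vW); congr maxn.
by apply: (bigmaxS (fun F => #|F|) (i0 := set0)); rewrite sub0set independent0.
Qed.

Lemma indep_num_setT : indep_num e = indep_num_in setT.
Proof. by apply: eq_bigl => F; rewrite subsetT. Qed.

End IndependentSets.

Lemma independent_imset n N (e : rel 'I_n) (e' : rel 'I_N) (f : 'I_n -> 'I_N)
    (F : {set 'I_n}) :
  {mono f : a b / e a b >-> e' a b} -> independent e' (f @: F) = independent e F.
Proof.
move=> fe; apply/independentP/independentP => H x y.
  by move=> xF yF; rewrite -fe; apply: H; apply: imset_f.
by case/imsetP=> a aF -> /imsetP[b bF ->]; rewrite fe; apply: H.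
Qed.

Lemma big_indep_imset n N (e : rel 'I_n) (e' : rel 'I_N) (f : 'I_n -> 'I_N)
    (R : Type) (idx : R) (op : Monoid.com_law idx) (g : nat -> R) (W : {set 'I_n}) :
  injective f -> {mono f : a b / e a b >-> e' a b} ->
  big_indep e' idx op g (f @: W) = big_indep e idx op g W.
Proof.
move=> finj fe; rewrite /big_indep.
rewrite (reindex_onto (fun F : {set 'I_n} => f @: F) (fun F => f @^-1: F)) /=.
  apply: eq_big => F; last by rewrite card_imset.
  have fS : (f @: F \subset f @: W) = (F \subset W).
    apply/idP/idP => [/subsetP fFW | /imsetS //]; apply/subsetP => x xF.
    by rewrite -(mem_imset _ _ finj) fFW ?imset_f.
  have fK : f @^-1: (f @: F) = F by apply/setP => x; rewrite inE mem_imset.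
  by rewrite fS (independent_imset _ fe) fK eqxx andbT.
move=> F /andP[FfW _]; apply/setP => y; apply/imsetP/idP => [[x] | yF].
  by rewrite inE => xF ->.
by case/imsetP: (subsetP FfW y yF) => x _ yfx; exists x; rewrite // inE -yfx.
Qed.

Fixpoint ncompositions (f d : nat) : nat :=
  if f is f'.+1 then \sum_(1 <= v < d.+1) ncompositions f' (d - v) else (d == 0 : nat).

Section Monomials.
Variables (N D : nat).
Local Notation monomial := {ffun 'I_N -> 'I_D.+1}.
Implicit Types (m : monomial) (F : {set 'I_N}) (x : 'I_N).

Definition supp m : {set 'I_N} := [set i | m i != 0 :> nat].
Definition mdeg m : nat := \sum_(i < N) m i.
Definition nmono_supp F d : nat := #|[set m | (mdeg m == d) && (supp m == F)]|.

Definition mupd m x (j : 'I_D.+1) : monomial := [ffun i => if i == x then j else m i].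

Lemma mdeg_upd m x j : mdeg (mupd m x j) + m x = j + mdeg m.
Proof.
rewrite /mdeg [X in X + _](bigD1 x) // [X in _ = _ + X](bigD1 x) //= ffunE eqxx.
under eq_bigr => i ix do rewrite ffunE (negbTE ix).
lia.
Qed.

Lemma supp_upd m x j :
  supp (mupd m x j) = if j == 0 :> nat then supp m :\ x else x |: supp m.
Proof.
have [j0 | j0] := eqVneq (j : nat) 0; rewrite ?j0 /=; apply/setP => i; rewrite !inE ffunE;
  by case: (i =P x) => [-> | /eqP ix]; rewrite ?j0 ?ix ?eqxx.
Qed.

Lemma mupd_id m x : mupd m x (m x) = m.
Proof. by apply/ffunP => i; rewrite ffunE; case: eqP => [-> |]. Qed.

Lemma mupd_upd m x j j' : mupd (mupd m x j) x j' = mupd m x j'.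
Proof. by apply/ffunP => i; rewrite !ffunE; case: eqP. Qed.

Lemma nmono_supp0 d : nmono_supp set0 d = (d == 0 : nat).
Proof.
rewrite /nmono_supp; pose m0 : monomial := [ffun => ord0].
have supp0 m : (supp m == set0) = (m == m0).
  apply/eqP/eqP => [suppm | ->]; last by apply/setP => i; rewrite !inE ffunE.
  apply/ffunP => i; rewrite ffunE; apply/val_inj.
  by move/setP/(_ i): suppm; rewrite !inE => /negbFE/eqP.
have mdeg0 : mdeg m0 = 0 by rewrite /mdeg big1 // => i _; rewrite ffunE.
have -> : [set m | (mdeg m == d) && (supp m == set0)] = if d == 0 then [set m0] else set0.
  apply/setP => m; rewrite inE supp0.
  case: (d =P 0) => [-> | d0]; rewrite !inE;
    case: (m =P m0) => [-> | _]; rewrite ?andbF ?mdeg0 //.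
  by rewrite andbT; apply/eqP => /esym.
by case: (d == 0); rewrite ?cards1 ?cards0.
Qed.

Lemma nmono_supp_fiber F x d v : x \in F -> 0 < v <= d -> d <= D ->
  #|[set m | [&& mdeg m == d, supp m == F & m x == v :> nat]]| = nmono_supp (F :\ x) (d - v).
Proof.
move=> xF /andP[v0 vd] dD; have vD : v < D.+1 by lia.
pose j := Ordinal vD; have j0 : j != 0 :> nat by rewrite /= -lt0n.
have suppD1_0 m : supp m == F :\ x -> m x = 0 :> nat.
  by move=> /eqP sm; move: (setD11 x F); rewrite -sm inE => /negbFE/eqP.
rewrite /nmono_supp -[in RHS](card_in_imset (f := fun m => mupd m x j)); last first.
  move=> m1 m2; rewrite !inE => /andP[_ s1] /andP[_ s2] /ffunP m12.
  apply/ffunP => i; move: (m12 i); rewrite !ffunE.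
  case: (i =P x) => [-> _ | //].
  by apply/val_inj => /=; rewrite (suppD1_0 _ s1) (suppD1_0 _ s2).
apply: eq_card => m; rewrite inE; apply/and3P/imsetP => [[dm sm mxv] | [m']].
  exists (mupd m x ord0).
    rewrite inE supp_upd /= (eqP sm) eqxx andbT; apply/eqP.
    by move: (mdeg_upd m x ord0); rewrite (eqP dm) (eqP mxv) /=; lia.
  by rewrite mupd_upd -{1}(mupd_id m x); congr mupd; exact/val_inj/eqP.
rewrite inE => /andP[dm' sm'] ->; have m'x := suppD1_0 _ sm'.
split.
- by apply/eqP; move: (mdeg_upd m' x j); rewrite (eqP dm') m'x /=; lia.
- by rewrite supp_upd (negbTE j0) (eqP sm') setD1K.
- by rewrite ffunE eqxx.
Qed.

Lemma nmono_supp_split F x d : x \in F -> d <= D ->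
  nmono_supp F d = \sum_(1 <= v < d.+1) nmono_supp (F :\ x) (d - v).
Proof.
move=> xF dD.
pose fiber v := #|[set m | [&& mdeg m == d, supp m == F & m x == v :> nat]]|.
have -> : nmono_supp F d = \sum_(0 <= v < D.+1) fiber v.
  rewrite big_mkord /nmono_supp -sum1_card (partition_big (fun m => m x) xpredT) //=.
  by apply: eq_bigr => j _; rewrite /fiber -sum1_card; apply: eq_bigl => m; rewrite !inE -andbA.
have fiber0 : fiber 0 = 0.
  rewrite /fiber; apply: eq_card0 => m; rewrite !inE; apply/and3P => -[_ /eqP sm /eqP mx0].
  by move: xF; rewrite -sm inE mx0.
have fiber_gt : \sum_(d.+1 <= v < D.+1) fiber v = 0.
  rewrite big_nat_cond big1 // => v /andP[/andP[dv _] _]; rewrite /fiber.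
  apply: eq_card0 => m; rewrite !inE; apply/and3P => -[/eqP dm _ /eqP mxv].
  have : m x <= mdeg m by rewrite /mdeg (bigD1 x) //= leq_addr.
  by rewrite dm mxv leqNgt dv.
rewrite (big_cat_nat _ (n := d.+1)) //= ?ltnS // fiber_gt addn0 big_ltn // fiber0 add0n.
by apply: eq_big_nat => v vd; apply: nmono_supp_fiber.
Qed.

Lemma nmono_suppE F d : d <= D -> nmono_supp F d = ncompositions #|F| d.
Proof.
move cardF: #|F| => f; elim: f F d cardF => [|f IH] F d cardF dD.
  by move/eqP: cardF; rewrite cards_eq0 => /eqP ->; rewrite nmono_supp0.
have /card_gt0P[x xF] : 0 < #|F| by rewrite cardF.
rewrite (nmono_supp_split xF dD); apply: eq_big_nat => v /andP[v1 vd].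
by apply: IH; [move: cardF; rewrite (cardsD1 x F) xF => -[] | lia].
Qed.

Lemma independent_supp (e : rel 'I_N) m :
  independent e (supp m) =
  [forall i, forall j, e i j ==> (m i == 0 :> nat) || (m j == 0 :> nat)].
Proof.
apply/independentP/forallP => [H i | H i j]; last first.
  rewrite !inE => mi mj; apply/negP => /(implyP (forallP (H i) j)).
  by rewrite (negbTE mi) (negbTE mj).
apply/forallP => j; apply/implyP; apply: contraTT; rewrite negb_or => /andP[mi mj].
by apply: H; rewrite inE.
Qed.

End Monomials.

Lemma hilb_funE N (e : rel 'I_N) d :
  hilb_fun e d = \sum_(F : {set 'I_N} | independent e F) ncompositions #|F| d.
Proof.
rewrite /hilb_fun -sum1_card (partition_big (@supp N d) (independent e)) => [|m]; last first.
  by rewrite inE independent_supp => /andP[].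
apply: eq_bigr => F iF; rewrite -(nmono_suppE F (leqnn d)) /nmono_supp -sum1_card.
apply: eq_bigl => m; rewrite !inE -independent_supp.
by case: (supp m =P F) => [-> | _]; rewrite ?iF ?andbF ?andbT.
Qed.

Lemma ncompositionsS0 f : ncompositions f.+1 0 = 0.
Proof. by rewrite /= big_geq. Qed.

Lemma ncompositionsSS f d :
  ncompositions f.+1 d.+1 = ncompositions f.+1 d + ncompositions f d.
Proof. by rewrite /= big_nat_recl // subn1 addnC. Qed.

Section HCoefficients.
Local Open Scope ring_scope.

Definition hcoef_term (a f k : nat) : int :=
  \sum_(j < k.+1) (-1) ^+ j * 'C(a, j)%:Z * (ncompositions f (k - j))%:Z.

Lemma hcoef_termSSS a f k : hcoef_term a.+1 f.+1 k.+1 = hcoef_term a f k.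
Proof.
set s := fun j : nat => ((-1) ^+ j : int).
set c := ncompositions f.+1.
set A := \sum_(j < k.+2) s j * 'C(a, j)%:Z * (c (k.+1 - j)%N)%:Z.
have pascal : hcoef_term a.+1 f.+1 k.+1 =
    A + \sum_(j < k.+1) s j.+1 * 'C(a, j)%:Z * (c (k - j)%N)%:Z.
  rewrite /hcoef_term /A big_ord_recl [X in _ = X + _]big_ord_recl !bin0 -addrA.
  congr (_ + _); rewrite -big_split; apply: eq_bigr => i _.
  by rewrite lift0 subSS binS PoszD !mulrDr !mulrDl.
have shift : A = \sum_(j < k.+1)
    s j * 'C(a, j)%:Z * ((c (k - j)%N)%:Z + (ncompositions f (k - j))%:Z).
  rewrite /A big_ord_recr /= subnn /c ncompositionsS0 mulr0 addr0.
  apply: eq_bigr => i _; rewrite -PoszD -ncompositionsSS subSn //.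
  by rewrite -ltnS.
rewrite pascal shift /hcoef_term -big_split /=; apply: eq_bigr => i _.
rewrite /s exprS; ring.
Qed.

Lemma hcoef_termE f a k : (f <= a)%N ->
  hcoef_term a f k = if (f <= k)%N then (-1) ^+ (k - f) * 'C(a - f, k - f)%:Z else 0.
Proof.
elim: f a k => [|f IH] a k fa.
  rewrite /hcoef_term !subn0 (bigD1 ord_max) //= subnn mulr1 big1 ?addr0 // => i.
  by rewrite -val_eqE /= => ik; rewrite subn_eq0 leqNgt ltn_neqAle ik -ltnS ltn_ord mulr0.
case: a fa => [//|a] fa.
case: k => [|k]; first by rewrite /hcoef_term big_ord1 subnn ncompositionsS0 mulr0.
by rewrite hcoef_termSSS IH.
Qed.

Lemma hcoef_sum N (e : rel 'I_N) k :
  hcoef e k = \sum_(F : {set 'I_N} | independent e F) hcoef_term (indep_num e) #|F| k.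
Proof.
rewrite /hcoef /hcoef_term.
under eq_bigr => j _ do rewrite hilb_funE (big_morph Posz PoszD (erefl (Posz 0))) mulr_sumr.
by rewrite exchange_big.
Qed.

Lemma card_le_indep_num N (e : rel 'I_N) F : independent e F -> (#|F| <= indep_num e)%N.
Proof. by rewrite indep_num_setT; apply: leq_card_indep_num_in; rewrite subsetT. Qed.

Lemma pseudo_gorenstein_starE N (e : rel 'I_N) :
  pseudo_gorenstein_star e <-> alt_indep e setT = (-1) ^+ indep_num e.
Proof.
set a := indep_num e.
have h_gt k : (a < k)%N -> hcoef e k = 0.
  move=> ak; rewrite hcoef_sum big1 // => F /card_le_indep_num Fa.
  by rewrite hcoef_termE // ifT ?bin_small ?mulr0 //; lia.
have h_top : hcoef e a = (-1) ^+ a * alt_indep e setT.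
  rewrite hcoef_sum /alt_indep /big_indep mulr_sumr; apply: eq_big => F; first by rewrite subsetT.
  move=> /card_le_indep_num; rewrite -/a => Fa.
  by rewrite hcoef_termE // Fa binn mulr1 -{2}(subnK Fa) exprD -mulrA -expr2 sqrr_sign mulr1.
rewrite /pseudo_gorenstein_star h_top; split => [[top _] | ->].
  by rewrite -(signrMK a (alt_indep e setT)) top mulr1.
by split; [rewrite -expr2 sqrr_sign | exact: h_gt].
Qed.

End HCoefficients.

Section Suspension.
Variables (N : nat) (e : rel 'I_N) (C : {set 'I_N}).
Hypotheses (e_sym : symmetric e) (e_irr : irreflexive e).
Local Notation G := (suspension e C).
Local Notation apex := (@ord_max N).
Local Notation lft := (@lift N.+1 ord_max).

Lemma suspension_lift : {mono lft : a b / e a b >-> G a b}.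
Proof. by move=> a b; rewrite /suspension !liftK. Qed.

Lemma suspension_sym : symmetric G.
Proof.
move=> x y; rewrite /suspension.
by case: (unlift _ x) => [a|]; case: (unlift _ y) => [b|] //; apply: e_sym.
Qed.

Lemma suspension_irr : irreflexive G.
Proof. by move=> x; rewrite /suspension; case: (unlift _ x) => [a|] //; apply: e_irr. Qed.

Lemma apex_notin_lift (A : {set 'I_N}) : apex \notin lft @: A.
Proof. by apply/imsetP => -[a _ /eqP]; rewrite (negbTE (neq_lift _ _)). Qed.

Lemma setT_apex : [set: 'I_N.+1] :\ apex = lft @: setT.
Proof.
apply/setP => u; case: (unliftP apex u) => [a -> | ->].
  by rewrite !inE eq_sym neq_lift imset_f.
by rewrite setD11 (negbTE (apex_notin_lift _)).
Qed.

Lemma setT_apex_nbhd : lft @: setT :\: nbhd G apex = lft @: ~: C.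
Proof.
apply/setP => u; case: (unliftP apex u) => [a -> | ->]; last first.
  by rewrite [RHS](negbTE (apex_notin_lift _)) !inE (negbTE (apex_notin_lift _)) andbF.
rewrite !inE !(mem_imset _ _ (@lift_inj _ apex)) !inE andbT.
by rewrite /suspension unlift_none liftK.
Qed.

Lemma alt_indep_suspension :
  alt_indep G setT = (alt_indep e setT - alt_indep e (~: C))%R.
Proof.
rewrite (alt_indep_split suspension_sym suspension_irr (in_setT apex)) setT_apex setT_apex_nbhd.
by rewrite /alt_indep !(big_indep_imset _ _ _ (@lift_inj _ _) suspension_lift).
Qed.

Lemma indep_num_suspension :
  indep_num G = maxn (indep_num_in e setT) (indep_num_in e (~: C)).+1.
Proof.
rewrite indep_num_setT (indep_num_in_split suspension_sym suspension_irr (in_setT apex)).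
rewrite setT_apex setT_apex_nbhd.
by rewrite /indep_num_in !(big_indep_imset _ _ _ (@lift_inj _ _) suspension_lift).
Qed.

End Suspension.

Fixpoint path_alt (k : nat) : int :=
  if k is k1.+1 then (if k1 is k2.+1 then path_alt k1 - path_alt k2 else 0) else 1.

Lemma path_altS k : path_alt k.+1 = (path_alt k - path_alt k.-1)%R.
Proof. by case: k => [|k] //=; rewrite subrr. Qed.

Lemma path_altM6 q r : path_alt (q * 6 + r) = path_alt r.
Proof.
elim: q => // q IH; rewrite mulSn -addnA -{}IH.
move: (q * 6 + r) => k; rewrite !addSn add0n !path_altS /=; ring.
Qed.

Definition cycle_alt (r : nat) : int := nth 0%R [:: 2; 1; -1; -2; -1; 1]%R r.

Lemma path_alt_cycle k : (path_alt k.+2 - path_alt k)%R = cycle_alt ((k + 3) %% 6).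
Proof.
rewrite (divn_eq k 6) -!addnS -addnA modnMDl !path_altM6.
by case: (k %% 6) (ltn_pmod k (isT : 0 < 6)) => [|[|[|[|[|[|r]]]]]].
Qed.

Lemma setCI2 (T : finType) (A : {set T}) y z :
  y \notin A -> z \in A -> ~: A :&: [set y; z] = [set y].
Proof.
move=> yA zA; apply/setP => x; rewrite !inE.
by case: (x =P y) => [-> | _]; [rewrite yA | case: (x =P z) => [-> |]; rewrite ?zA ?andbF].
Qed.

Section Cycle.
Variable n : nat.
Local Notation cyc := (@cycle_rel n).
Implicit Types (u w : 'I_n).

Lemma cycle_relE u w : cyc u w = (w == ordS u) || (u == ordS w).
Proof. by []. Qed.

Lemma cycle_rel_nat u w : cyc u w =
  [|| (w == u.+1 :> nat), (u.+1 == n) && (w == 0 :> nat),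
      (u == w.+1 :> nat) | (w.+1 == n) && (u == 0 :> nat)].
Proof.
have modS (i : 'I_n) : i.+1 %% n = if i.+1 == n then 0 else i.+1.
  by case: eqP => [-> | ?]; rewrite ?modnn // modn_small //; have := ltn_ord i; lia.
rewrite /cycle_rel /= !modS.
by have := ltn_ord u; have := ltn_ord w; case: (u.+1 =P n); case: (w.+1 =P n) => /=; lia.
Qed.

Lemma cycle_rel_sym : symmetric cyc.
Proof. by move=> u w; rewrite cycle_relE orbC. Qed.

Lemma cycle_nbhd u : nbhd cyc u = [set ordS u; ord_pred u].
Proof.
by apply/setP => w; rewrite !inE cycle_relE [u == _]eq_sym (can2_eq (@ordSK n) (@ord_predK n)).
Qed.

Hypothesis n_gt2 : 2 < n.

Lemma cycle_rel_irr : irreflexive cyc.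
Proof. by move=> u; rewrite cycle_rel_nat; have := ltn_ord u; lia. Qed.

Definition segment (a k : nat) : {set 'I_n} := [set i : 'I_n | a <= i < a + k].

Lemma alt_indep_segmentS a k : a + k.+1 < n ->
  alt_indep cyc (segment a k.+1) =
  (alt_indep cyc (segment a k) - alt_indep cyc (segment a k.-1))%R.
Proof.
move=> akn; have ak : a + k < n by lia.
have vP : Ordinal ak \in segment a k.+1 by rewrite inE /=; lia.
have del_v : segment a k.+1 :\ Ordinal ak = segment a k.
  by apply/setP => u; rewrite !inE -val_eqE /=; lia.
have del_nbhd : segment a k :\: nbhd cyc (Ordinal ak) = segment a k.-1.
  by apply/setP => u; rewrite !inE cycle_rel_nat /=; have := ltn_ord u; lia.
by rewrite (alt_indep_split cycle_rel_sym cycle_rel_irr vP) del_v del_nbhd.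
Qed.

Lemma alt_indep_segment a k : a + k < n -> alt_indep cyc (segment a k) = path_alt k.
Proof.
elim/ltn_ind: k => -[|k] IH akn.
  by rewrite (_ : segment a 0 = set0) ?alt_indep0 //; apply/setP => u; rewrite !inE; lia.
by rewrite alt_indep_segmentS // path_altS !IH //; lia.
Qed.

Lemma alt_indep_cycle : alt_indep cyc setT = cycle_alt (n %% 6).
Proof.
have vn : n.-1 < n by lia.
rewrite (alt_indep_split cycle_rel_sym cycle_rel_irr (in_setT (Ordinal vn))).
have -> : setT :\ Ordinal vn = segment 0 (n - 3).+2.
  by apply/setP => u; rewrite !inE -val_eqE /=; have := ltn_ord u; lia.
have -> : segment 0 (n - 3).+2 :\: nbhd cyc (Ordinal vn) = segment 1 (n - 3).
  by apply/setP => u; rewrite !inE cycle_rel_nat /=; have := ltn_ord u; lia.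
rewrite !alt_indep_segment ?path_alt_cycle; try lia.
by rewrite (_ : n - 3 + 3 = n)%N //; lia.
Qed.

Lemma indep_num_cycle : indep_num_in cyc setT = n./2.
Proof.
apply/eqP; rewrite eqn_leq; apply/andP; split.
  apply/indep_num_inP => F _ /independentP iF.
  have dis : F :&: @ordS n @: F = set0.
    apply/setP => x; rewrite !inE; apply/andP => -[xF /imsetP[y yF xy]].
    by move: (iF y x yF xF); rewrite xy cycle_relE eqxx.
  have := max_card (F :|: @ordS n @: F).
  rewrite card_ord cardsU dis cards0 subn0 card_imset; last exact: ordS_inj.
  by rewrite addnn => /half_leq; rewrite doubleK.
have even_lt (k : 'I_n./2) : k.*2 < n by have := ltn_ord k; lia.
pose f k := Ordinal (even_lt k).
have finj : injective f by move=> a b /(congr1 val) /= ab; apply/val_inj => /=; lia.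
have <- : #|f @: setT| = n./2 by rewrite card_imset // cardsT card_ord.
apply: leq_card_indep_num_in (subsetT _) _.
apply/independentP => _ _ /imsetP[a _ ->] /imsetP[b _ ->]; rewrite cycle_rel_nat /=.
by have := ltn_ord a; have := ltn_ord b; lia.
Qed.

Variable C : {set 'I_n}.
Hypothesis C_max : maximal_independent cyc C.

Lemma ordS_notin x : x \in C -> ordS x \notin C.
Proof.
move=> xC; apply/negP => sC; have /independentP iC := C_max.1.
by move: (iC x _ xC sC); rewrite cycle_relE eqxx.
Qed.

Lemma ordS_cover : @ordS n @: C :|: @ordS n @^-1: C = ~: C.
Proof.
apply/setP => w; rewrite !inE; apply/idP/idP.
  case/orP => [/imsetP[x xC ->] | ]; first exact: ordS_notin.
  by apply: contraL => wC; apply: ordS_notin.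
move/(maximal_independent_dominating cycle_rel_sym cycle_rel_irr C_max) => [y yC].
by rewrite cycle_relE => /orP[/eqP yw | /eqP->]; [rewrite -yw yC orbT | rewrite imset_f].
Qed.

Lemma indep_num_cycle_compl : indep_num_in cyc (~: C) = #|C|.
Proof.
apply/eqP; rewrite eqn_leq; apply/andP; split.
  apply/indep_num_inP => F sF /independentP iF.
  pose g w := if ordS w \in C then ordS w else ordS (ordS w).
  have gC w : w \in F -> g w \in C.
    move=> wF; have wC : w \notin C by move: (subsetP sF w wF); rewrite inE.
    rewrite /g; case: ifP => // /negbT sC.
    have [y yC] := maximal_independent_dominating cycle_rel_sym cycle_rel_irr C_max sC.
    by rewrite cycle_relE => /orP[/eqP<- // | /eqP/ordS_inj wy]; move: wC; rewrite wy yC.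
  have ginj : {in F &, injective g}.
    move=> a b aF bF; rewrite /g.
    case: ifP => ha; case: ifP => hb.
    - exact: ordS_inj.
    - by move/ordS_inj => ab; move: (iF b a bF aF); rewrite cycle_relE ab eqxx ?orbT.
    - by move/ordS_inj => ab; move: (iF a b aF bF); rewrite cycle_relE -ab eqxx ?orbT.
    - by move/ordS_inj/ordS_inj.
  rewrite -(card_in_imset ginj); apply: subset_leq_card.
  by apply/subsetP => y /imsetP[w wF ->]; apply: gC.
rewrite -(card_imset C (@ordS_inj n)); apply: leq_card_indep_num_in.
  by rewrite -ordS_cover subsetUl.
apply/independentP => a b /imsetP[x xC ->] /imsetP[y yC ->].
rewrite !cycle_relE !(inj_eq (@ordS_inj n)) -cycle_relE.
by move/independentP: C_max.1; apply.
Qed.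

Lemma alt_indep_cycle_compl :
  alt_indep cyc (~: C) = if n == 3 * #|C| then ((-1) ^+ #|C|)%R else 0%R.
Proof.
set S := @ordS n @: C; set P := @ordS n @^-1: C.
have inS w : (w \in S) = (ord_pred w \in C).
  by rewrite -{1}(ord_predK w) mem_imset //; exact: ordS_inj.
have inP w : (w \in P) = (ordS w \in C) by rewrite inE.
have cardCC : #|~: C| = n - #|C| by rewrite cardsCs setCK card_ord.
have := cardsUI S P; rewrite ordS_cover card_imset ?card_preimset; try exact: ordS_inj.
rewrite cardCC => card_cover.
have [SP0 | [w /setIP[wS wP]]] := set_0Vmem (S :&: P); last first.
  have /negbTE -> : n != 3 * #|C|.
    have /card_gt0P : exists w, w \in S :&: P by exists w; rewrite inE wS.
    set c := #|C| in card_cover *; lia.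
  apply: (alt_indep_isolated cycle_rel_sym cycle_rel_irr (v := w)).
    by rewrite -ordS_cover inE wS.
  by rewrite cycle_nbhd disjoint_sym disjoints_subset setCK subUset !sub1set -inP -inS wS wP.
have n3 : n = 3 * #|C|.
  by move: card_cover (max_card C); rewrite SP0 cards0 card_ord; set c := #|C|; lia.
rewrite (introT eqP n3) /=; apply: (alt_indep_perfect_matching cycle_rel_sym cycle_rel_irr).
  by rewrite cardCC; set c := #|C| in n3 *; lia.
have SnP w : w \in S -> w \notin P.
  by move=> wS; apply/negP => wP; move/setP/(_ w): SP0; rewrite inE wS wP inE.
move=> w; rewrite -{1}ordS_cover inE => /orP[wS | wP].
  have wP := SnP w wS.
  by exists (ordS w); rewrite cycle_nbhd setCI2 -?inP -?inS.
have wS := contraL (SnP w) wP.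
by exists (ord_pred w); rewrite cycle_nbhd setUC setCI2 -?inP -?inS.
Qed.

End Cycle.

Lemma cycle_suspension_arith n c : 3 < n -> c <= n./2 ->
  (cycle_alt (n %% 6) - (if n == 3 * c then (-1) ^+ c else 0) = (-1) ^+ maxn n./2 c.+1)%R <->
  [\/ (n %% 12 \in [:: 0; 3]) /\ c = (n + 2) %/ 3,
      (n %% 12 \in [:: 4; 7; 8; 11]) /\ c = n %/ 2
    | (n %% 12 \in [:: 1; 2; 5; 10]) /\ c <> n %/ 2].
Proof.
move=> n_gt3 cn; rewrite -signr_odd -[in RHS]signr_odd !inE.
have or3E (A B D : Prop) : [\/ A, B | D] <-> A \/ B \/ D.
  by split=> [[] | [|[]]]; auto => *; [constructor 1 | constructor 2 | constructor 3].
apply: iff_trans (iff_sym (or3E _ _ _)).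
have := ltn_pmod n (isT : 0 < 6).
case: (odd (maxn n./2 c.+1)) / idP => ?; case: (n =P 3 * c) => ?; case: (odd c) / idP => ?;
  case E6: (n %% 6) => [|[|[|[|[|[|r]]]]]] //= _; rewrite /cycle_alt /= ?expr0 ?expr1; lia.
Qed.

Theorem corollary6p4 (n : nat) (C : {set 'I_n}) :
  4 <= n ->
  maximal_independent (@cycle_rel n) C ->
  (pseudo_gorenstein_star (suspension (@cycle_rel n) C) <->
   [\/ (n %% 12 \in [:: 0; 3]) /\ #|C| = (n + 2) %/ 3,
       (n %% 12 \in [:: 4; 7; 8; 11]) /\ #|C| = n %/ 2
     | (n %% 12 \in [:: 1; 2; 5; 10]) /\ #|C| <> n %/ 2]).
Proof.
move=> n_ge4 C_max; have n_gt2 : 2 < n by lia.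
have C_le : #|C| <= n./2.
  by rewrite -(indep_num_cycle n_gt2) leq_card_indep_num_in ?subsetT ?C_max.1.
have sym := @cycle_rel_sym n; have irr := cycle_rel_irr n_gt2.
rewrite pseudo_gorenstein_starE (alt_indep_suspension _ sym irr) (indep_num_suspension _ sym irr).
rewrite alt_indep_cycle // alt_indep_cycle_compl // indep_num_cycle // indep_num_cycle_compl //.
exact: cycle_suspension_arith.
Qed.
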